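(* Let $\mathcal{G}$ be a Grothendieck category, $X\in\mathcal{G}$, $\sigma$ an ordinal, $(X_\alpha\mid\alpha\le\sigma)$ a chain of subobjects of $X$ with $X_0=0$, $X_\sigma=X$, $X_\mu=\bigcup_{\alpha<\mu}X_\alpha$ for limit $\mu\le\sigma$, and let $(A_\alpha\mid\alpha<\sigma)$ be subobjects of $X$ with $X_{\alpha+1}=X_\alpha+A_\alpha$ for all $\alpha<\sigma$. If $S\subseteq\sigma$ is closed, then $\ell(S)\cap X_\alpha=\ell(S\cap\alpha)$ for every $\alpha<\sigma$.
   Context: For $S\subseteq\sigma$ (with $\sigma$ identified with the set of ordinals $<\sigma$), $\ell(S)=\sum_{\alpha\in S}A_\alpha\in\mathrm{Subobj}(X)$. A subset $S\subseteq\sigma$ is called closed if every $\alpha\in S$ satisfies $X_\alpha\cap A_\alpha\subseteq\sum_{\gamma\in S,\,\gamma<\alpha}A_\gamma$. Sums, intersections and direct unions are taken in the lattice $\mathrm{Subobj}(X)$ of subobjects of $X$. *)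

(* Abstract setting: the subobject lattice Subobj(X) of an
   object X of a Grothendieck category is a complete, modular lattice
   satisfying the AB5 condition (meets distribute over directed sups);
   this is the structure we axiomatise.  Ordinals are modelled by an
   arbitrary well-ordered type. *)
From Stdlib Require Import Classical.

Record UCModLattice := {
  car :> Type;
  le : car -> car -> Prop;
  le_refl : forall a, le a a;
  le_trans : forall a b c, le a b -> le b c -> le a c;
  le_antisym : forall a b, le a b -> le b a -> a = b;
  meet : car -> car -> car;
  meet_lb_l : forall a b, le (meet a b) a;
  meet_lb_r : forall a b, le (meet a b) b;
  meet_glb : forall a b c, le c a -> le c b -> le c (meet a b);
  sup : (car -> Prop) -> car;
  sup_ub : forall (D : car -> Prop) a, D a -> le a (sup D);
  sup_lub : forall (D : car -> Prop) c, (forall a, D a -> le a c) -> le (sup D) c;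
  modular : forall a b c, le a c ->
    sup (fun x => x = a \/ x = meet b c) = meet (sup (fun x => x = a \/ x = b)) c;
  upper_cont : forall (a : car) (D : car -> Prop),
    (exists d, D d) ->
    (forall d1 d2, D d1 -> D d2 -> exists d3, D d3 /\ le d1 d3 /\ le d2 d3) ->
    meet a (sup D) = sup (fun y => exists d, D d /\ y = meet a d)
}.

Arguments le {_} _ _.
Arguments meet {_} _ _.
Arguments sup {_} _.

Definition bot (L : UCModLattice) : L := sup (fun _ : L => False).
Definition top (L : UCModLattice) : L := sup (fun _ : L => True).
Definition join {L : UCModLattice} (a b : L) : L := sup (fun x => x = a \/ x = b).

Record WellOrder := {
  wcar :> Type;
  wlt : wcar -> wcar -> Prop;
  wlt_irrefl : forall a, ~ wlt a a;
  wlt_trans : forall a b c, wlt a b -> wlt b c -> wlt a c;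
  wlt_total : forall a b, wlt a b \/ a = b \/ wlt b a;
  wlt_wf : well_founded wlt
}.

Arguments wlt {_} _ _.

Definition wle {I : WellOrder} (a b : I) : Prop := wlt a b \/ a = b.

Definition is_zero {I : WellOrder} (a : I) : Prop := forall b, ~ wlt b a.

Definition is_succ {I : WellOrder} (a s : I) : Prop :=
  wlt a s /\ forall c, wlt a c -> wle s c.

Definition is_limit {I : WellOrder} (m : I) : Prop :=
  (exists b, wlt b m) /\ forall b, wlt b m -> exists c, wlt b c /\ wlt c m.

Definition ell {L : UCModLattice} {I : WellOrder} (A : I -> L) (S : I -> Prop) : L :=
  sup (fun y => exists a, S a /\ y = A a).

Definition closed_set {L : UCModLattice} {I : WellOrder}
    (X A : I -> L) (S : I -> Prop) : Prop :=
  forall a, S a -> le (meet (X a) (A a)) (ell A (fun g => S g /\ wlt g a)).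

(** Write [E b] for [ell A (S ∩ b)].  Fix [a] and show [E b ∩ X_a <= E a] by
    transfinite induction on [b] between [a] and [sigma].  At a successor
    [b = g + 1] with [g ∈ S] we have [E b <= E g + A_g] and [E g <= X_g], so
    modularity gives [(E g + A_g) ∩ X_g = E g + (A_g ∩ X_g)], which is [E g]
    because [S] is closed; hence [E b ∩ X_a <= E g ∩ X_a].  At a limit [b],
    [E b] is the directed union of the [E g], [g < b], and upper continuity
    reduces to the induction hypothesis.  Taking [b = sigma] gives the
    nontrivial inclusion. *)
From Stdlib Require Import Classical.

Section Lattice.
Context {L : UCModLattice}.
Implicit Types a b c x : L.

Lemma meet_comm_le a b : le (meet a b) (meet b a).
Proof. apply meet_glb; [apply meet_lb_r | apply meet_lb_l]. Qed.

Lemma join_l a b : le a (join a b).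
Proof. apply sup_ub. auto. Qed.

Lemma join_r a b : le b (join a b).
Proof. apply sup_ub. auto. Qed.

Lemma join_lub a b c : le a c -> le b c -> le (join a b) c.
Proof. intros Hac Hbc. apply sup_lub. intros x [-> | ->]; assumption. Qed.

Lemma modular_join a b c : le a c -> meet (join a b) c = join a (meet b c).
Proof. intros Hac. symmetry. exact (modular L a b c Hac). Qed.

Lemma modular_absorb a {b c} :
  le b c -> le (meet c a) b -> le (meet (join b a) c) b.
Proof.
  intros Hbc Hcab. rewrite modular_join by exact Hbc.
  apply join_lub; [apply le_refl |].
  eapply le_trans; [apply meet_comm_le | exact Hcab].
Qed.

Lemma directed_meet_sup_le (D : L -> Prop) c x :
  (exists d, D d) ->
  (forall d1 d2, D d1 -> D d2 -> exists d3, D d3 /\ le d1 d3 /\ le d2 d3) ->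
  (forall d, D d -> le (meet c d) x) -> le (meet c (sup D)) x.
Proof.
  intros Hne Hdir Hle. rewrite upper_cont by assumption.
  apply sup_lub. intros y [d [Hd ->]]. auto.
Qed.

End Lattice.

Section WellOrder.
Context {I : WellOrder}.
Implicit Types a b c d g : I.

Lemma wlt_wle_trans {a b c} : wlt a b -> wle b c -> wlt a c.
Proof. intros Hab [Hbc | <-]; [exact (wlt_trans I _ _ _ Hab Hbc) | exact Hab]. Qed.

Lemma wlt_wle_false {a b} : wlt a b -> wle b a -> False.
Proof. intros Hab Hba. exact (wlt_irrefl I a (wlt_wle_trans Hab Hba)). Qed.

Lemma exists_succ {g a} : wlt g a -> exists s, is_succ g s.
Proof.
  intros Hga. apply NNPP. intros Hnone.
  assert (Habove : forall x, ~ wlt g x).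
  { intros x. induction x as [x IH] using (well_founded_ind (wlt_wf I)).
    intros Hgx. apply Hnone. exists x. split; [exact Hgx |].
    intros c Hgc. destruct (wlt_total I x c) as [H | [H | H]].
    - left; exact H.
    - right; exact H.
    - exfalso. exact (IH c H Hgc). }
  exact (Habove a Hga).
Qed.

Lemma wlt_succ_inv {g b d} : is_succ g b -> wlt d b -> wle d g.
Proof.
  intros [_ Hmin] Hdb. destruct (wlt_total I d g) as [H | [H | H]].
  - left; exact H.
  - right; exact H.
  - exfalso. exact (wlt_wle_false Hdb (Hmin d H)).
Qed.

Lemma succ_or_limit b :
  (exists g, is_succ g b) \/ (forall d, wlt d b -> exists c, wlt d c /\ wlt c b).
Proof.
  destruct (classic (exists g, is_succ g b)) as [Hsucc | Hnsucc]; [left; exact Hsucc | right].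
  intros d Hdb. apply NNPP. intros Hgap. apply Hnsucc. exists d.
  split; [exact Hdb |]. intros c Hdc.
  destruct (wlt_total I c b) as [H | [H | H]].
  - exfalso. apply Hgap. exists c. split; assumption.
  - right; symmetry; exact H.
  - left; exact H.
Qed.

End WellOrder.

Section Segments.
Context {L : UCModLattice} {I : WellOrder}.
Variable A : I -> L.
Implicit Types (S T : I -> Prop) (b c g : I).

Lemma ell_le S x : (forall g, S g -> le (A g) x) -> le (ell A S) x.
Proof. intros H. apply sup_lub. intros y [g [Hg ->]]. auto. Qed.

Lemma A_le_ell S g : S g -> le (A g) (ell A S).
Proof. intros Hg. apply sup_ub. exists g. auto. Qed.

Lemma ell_mono S T : (forall g, S g -> T g) -> le (ell A S) (ell A T).
Proof. intros H. apply ell_le. intros g Hg. apply A_le_ell. auto. Qed.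

Definition ell_seg S b : L := ell A (fun g => S g /\ wlt g b).

Lemma ell_seg_mono S b c : wle b c -> le (ell_seg S b) (ell_seg S c).
Proof. intros Hbc. apply ell_mono. intros g [Hg Hgb]. split; [exact Hg | exact (wlt_wle_trans Hgb Hbc)]. Qed.

Lemma ell_seg_full {S b} : (forall g, S g -> wlt g b) -> ell A S = ell_seg S b.
Proof.
  intros HS. apply le_antisym; apply ell_mono; [intros g Hg; split; auto | tauto].
Qed.

Lemma ell_seg_succ S {g b} : is_succ g b -> le (ell_seg S b) (join (ell_seg S g) (A g)).
Proof.
  intros Hsucc. apply ell_le. intros d [Hd Hdb].
  destruct (wlt_succ_inv Hsucc Hdb) as [Hdg | ->].
  - eapply le_trans; [| apply join_l]. apply A_le_ell. split; assumption.
  - apply join_r.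
Qed.

Lemma ell_seg_succ_notin {S g b} : is_succ g b -> ~ S g -> le (ell_seg S b) (ell_seg S g).
Proof.
  intros Hsucc Hg. apply ell_le. intros d [Hd Hdb].
  destruct (wlt_succ_inv Hsucc Hdb) as [Hdg | ->].
  - apply A_le_ell. split; assumption.
  - contradiction.
Qed.

Lemma ell_seg_limit S {b} :
  (forall d, wlt d b -> exists c, wlt d c /\ wlt c b) ->
  le (ell_seg S b) (sup (fun y => exists g, wlt g b /\ y = ell_seg S g)).
Proof.
  intros Hlim. apply ell_le. intros d [Hd Hdb].
  destruct (Hlim d Hdb) as [c [Hdc Hcb]].
  eapply le_trans; [| apply sup_ub; exists c; split; [exact Hcb | reflexivity]].
  apply A_le_ell. split; assumption.
Qed.

Lemma ell_seg_directed S b y1 y2 :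
  (exists g, wlt g b /\ y1 = ell_seg S g) -> (exists g, wlt g b /\ y2 = ell_seg S g) ->
  exists y3, (exists g, wlt g b /\ y3 = ell_seg S g) /\ le y1 y3 /\ le y2 y3.
Proof.
  intros [g1 [Hg1 ->]] [g2 [Hg2 ->]].
  destruct (wlt_total I g1 g2) as [H | [<- | H]].
  - exists (ell_seg S g2). split; [eauto |]. split; [apply ell_seg_mono; left; exact H | apply le_refl].
  - exists (ell_seg S g1). split; [eauto |]. split; apply le_refl.
  - exists (ell_seg S g1). split; [eauto |]. split; [apply le_refl | apply ell_seg_mono; left; exact H].
Qed.

End Segments.

Section Filtration.
Context {L : UCModLattice} {I : WellOrder} {sigma : I} {X A : I -> L}.
Hypothesis Hchain : forall a b, wle a b -> wle b sigma -> le (X a) (X b).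
Hypothesis Hsucc : forall a s, wlt a sigma -> is_succ a s -> X s = join (X a) (A a).

Lemma ell_seg_le_X S {d} : wle d sigma -> le (ell_seg A S d) (X d).
Proof.
  intros Hd. apply ell_le. intros g [_ Hgd].
  destruct (exists_succ Hgd) as [s Hs].
  eapply le_trans; [apply join_r |].
  rewrite <- (Hsucc _ _ (wlt_wle_trans Hgd Hd) Hs).
  apply Hchain; [| exact Hd].
  destruct Hs as [_ Hmin]. exact (Hmin d Hgd).
Qed.

Variable S : I -> Prop.
Hypothesis Hclosed : closed_set X A S.

Lemma ell_seg_succ_meet_X {g b} :
  wlt g sigma -> is_succ g b -> le (meet (ell_seg A S b) (X g)) (ell_seg A S g).
Proof.
  intros Hg Hgb. destruct (classic (S g)) as [HSg | HSg].
  - eapply le_trans; [| apply (modular_absorb (A g) (ell_seg_le_X S (or_introl Hg)) (Hclosed _ HSg))].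
    apply meet_glb; [| apply meet_lb_r].
    eapply le_trans; [apply meet_lb_l | exact (ell_seg_succ A S Hgb)].
  - eapply le_trans; [apply meet_lb_l | exact (ell_seg_succ_notin A Hgb HSg)].
Qed.

Lemma ell_seg_meet_X {a b} :
  wle a b -> wle b sigma -> le (meet (ell_seg A S b) (X a)) (ell_seg A S a).
Proof.
  induction b as [b IH] using (well_founded_ind (wlt_wf I)).
  intros [Hab | <-] Hb; [| apply meet_lb_l].
  destruct (succ_or_limit b) as [[g Hgb] | Hlim].
  - pose proof (Hgb) as [Hg _].
    assert (Hag : wle a g) by exact (wlt_succ_inv Hgb Hab).
    eapply le_trans; [| apply (IH g Hg Hag (or_introl (wlt_wle_trans Hg Hb)))].
    apply meet_glb; [| apply meet_lb_r].
    eapply le_trans; [| apply (ell_seg_succ_meet_X (wlt_wle_trans Hg Hb) Hgb)].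
    apply meet_glb; [apply meet_lb_l |].
    eapply le_trans; [apply meet_lb_r | exact (Hchain _ _ Hag (or_introl (wlt_wle_trans Hg Hb)))].
  - eapply le_trans; [apply meet_comm_le |].
    eapply le_trans.
    { apply meet_glb; [apply meet_lb_l |].
      eapply le_trans; [apply meet_lb_r | exact (ell_seg_limit A S Hlim)]. }
    apply directed_meet_sup_le.
    + exists (ell_seg A S a). exists a. split; [exact Hab | reflexivity].
    + intros d1 d2. apply ell_seg_directed.
    + intros y [g [Hg ->]]. destruct (wlt_total I g a) as [Hga | [-> | Hag]].
      * eapply le_trans; [apply meet_lb_r | apply ell_seg_mono; left; exact Hga].
      * apply meet_lb_r.
      * eapply le_trans; [apply meet_comm_le |].
        exact (IH g Hg (or_introl Hag) (or_introl (wlt_wle_trans Hg Hb))).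
Qed.

End Filtration.

Theorem lemma2p3 (L : UCModLattice) (I : WellOrder) (sigma : I)
  (X A : I -> L)
  (Hchain : forall a b, wle a b -> wle b sigma -> le (X a) (X b))
  (H0 : forall z, is_zero z -> X z = bot L)
  (Hsigma : X sigma = top L)
  (Hlim : forall m, is_limit m -> wle m sigma ->
            X m = sup (fun y => exists a, wlt a m /\ y = X a))
  (Hsucc : forall a s, wlt a sigma -> is_succ a s -> X s = join (X a) (A a))
  (S : I -> Prop) (HS : forall a, S a -> wlt a sigma)
  (Hclosed : closed_set X A S) :
  forall a, wlt a sigma -> meet (ell A S) (X a) = ell A (fun g => S g /\ wlt g a).
Proof.
  intros a Ha.
  change (meet (ell A S) (X a) = ell_seg A S a).
  apply le_antisym.
  - rewrite (ell_seg_full A HS).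
    exact (ell_seg_meet_X Hchain Hsucc S Hclosed (or_introl Ha) (or_intror eq_refl)).
  - apply meet_glb.
    + apply ell_mono. tauto.
    + exact (ell_seg_le_X Hchain Hsucc S (or_introl Ha)).
Qed.
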